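(* Let $C$ be a set of pairwise disjoint lines on ${\rm F}_5$ and put $C^i=C\cap\mathcal{L}^i$ for $i=0,1,2$, with $\#C^0\ge4$. Let $\{s,r\}=\{1,2\}$ and suppose $C^s=\{L^s_{a_0,b_0},\dots,L^s_{a_4,b_4}\}$ with $\#C^s=5$ and $\#C^r=4$. Then $\#\{a_0,\dots,a_4\}\ge3$.
   Context: ${\rm F}_5\subset\mathbb{P}^3(\mathbb{C})$ is the surface $x^5-y^5-z^5+w^5=0$. Let $\eta$ be a primitive 5th root of unity and $v=-1$. For $k,i\in\{0,\dots,4\}$ define $L^0_{k,i}:\{y=\eta^i x,\ w=\eta^k z\}$, $L^1_{k,i}:\{x=\eta^{k+i}z,\ y=\eta^i w\}$, $L^2_{k,i}:\{x=v\eta^i w,\ y=v\eta^{k+i}z\}$, and $\mathcal{L}^s=\{L^s_{k,i}\}_{k,i}$; these 75 lines are all the lines on ${\rm F}_5$. *)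

From HB Require Import structures.
From mathcomp Require Import all_boot all_order all_algebra.
Set Implicit Arguments. Unset Strict Implicit. Unset Printing Implicit Defensive.
Import Order.TTheory GRing.Theory Num.Theory.
Local Open Scope ring_scope.

(* A label (s, (k, i)) names the line L^s_{k,i} on F_5 : x^5-y^5-z^5+w^5 = 0. *)
Definition label := ('I_3 * ('I_5 * 'I_5))%type.

Definition fam (l : label) : nat := l.1.
Definition kidx (l : label) : nat := l.2.1.
Definition iidx (l : label) : nat := l.2.2.

Definition onLine (F : numClosedFieldType) (eta : F) (l : label)
    (x y z w : F) : bool :=
  let k := kidx l in let i := iidx l in
  match fam l with
  | 0%N => (y == eta ^+ i * x) && (w == eta ^+ k * z)
  | 1%N => (x == eta ^+ (k + i) * z) && (y == eta ^+ i * w)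
  | _ => (x == (-1) * eta ^+ i * w) && (y == (-1) * eta ^+ (k + i) * z)
  end.

(* Two lines meet in P^3 iff they share a nonzero point of F^4. *)
Definition meet (F : numClosedFieldType) (eta : F) (l l' : label) : Prop :=
  exists x y z w : F, ~~ [&& x == 0, y == 0, z == 0 & w == 0] /\
    onLine eta l x y z w /\ onLine eta l' x y z w.

Definition famPart (C : {set label}) (s : nat) : {set label} :=
  [set l in C | fam l == s].

From HB Require Import structures.
From mathcomp Require Import all_boot all_order all_algebra.
From mathcomp Require Import zify.
Set Implicit Arguments.
Unset Strict Implicit.
Unset Printing Implicit Defensive.
Import GRing.Theory.
Local Open Scope ring_scope.

(* Two lines of one family L^s (s = 1, 2) meet when they share the index i or
   the residue of k + i mod 5, and L^1_{k,i} meets L^2_{k',i'} when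
   k + 2i = k' + 2i' mod 5.  So the five lines of C^s are L^s_{f(j),j} for
   j in F_5, where j |-> f(j) + j is a permutation of F_5 and f(j) + 2j avoids
   the value c of any line of C^r.  The permutation forces sum_j f(j) = 0, so if
   f took two values a != b with multiplicities m and 5 - m, then m(a - b) = 0
   in F_5, which is absurd; and f is not constant, as j |-> k + 2j hits c. *)

Lemma in_inj_card_section (T U : finType) (h : T -> U) (A : {set T}) :
  {in A &, injective h} -> #|A| = #|U| ->
  exists g : U -> T, forall u, g u \in A /\ h (g u) = u.
Proof.
move=> h_inj cardA.
have onto : h @: A = setT.
  apply/eqP; rewrite eqEcard subsetT cardsT (card_in_imset h_inj).
  by rewrite cardA leqnn.
have preim u : exists t, (t \in A) && (h t == u).
  have /imsetP[t tA ->] : u \in h @: A by rewrite onto inE.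
  by exists t; rewrite tA eqxx.
exists (fun u => xchoose (preim u)) => u.
by have /andP[? /eqP] := xchooseP (preim u).
Qed.

Lemma sumr_inj_addid_eq0 (G : finZmodType) (f : G -> G) :
  injective (fun x => f x + x) -> \sum_x f x = 0.
Proof.
move=> inj_shift.
have := reindex_inj (op := +%R) (x := 0) (P := predT) (F := id) inj_shift.
rewrite big_split /=.
by move/esym/(canRL (addrK _)); rewrite subrr.
Qed.

Section PrimeField.
Variable p : nat.
Hypothesis p_pr : prime p.

Lemma Fp_natr_eq m n : (m%:R == n%:R :> 'F_p) = (m == n %[mod p]).
Proof. by rewrite -val_eqE /= !val_Fp_nat. Qed.

Lemma Fp_two_valued_sum0_const (f : 'F_p -> 'F_p) (a b : 'F_p) :
  (forall x, f x \in [set a; b]) -> \sum_x f x = 0 ->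
  (forall x, f x = a) \/ (forall x, f x = b).
Proof.
move=> fab sum0; pose m := #|[pred x | f x == a]|.
have card_split : (m + #|[pred x | f x != a]| = p)%N.
  by rewrite -[RHS](card_Fp p_pr) -(cardC [pred x | f x == a]).
have : (a - b) *+ m = 0.
  rewrite -sum0 (bigID (fun x => f x == a)) /=.
  rewrite (eq_bigr (fun=> a)) => [|x /eqP //].
  rewrite [X in _ = _ + X](eq_bigr (fun=> b)) => [|x]; last first.
    by move: (fab x); rewrite !inE => /orP[->|/eqP].
  rewrite !sumr_const -/m mulrnBl; congr (_ + _); apply/esym/eqP.
  by rewrite -addr_eq0 addrC -mulrnDr card_split -mulr_natr pchar_Fp_0 ?mulr0.
move/eqP; rewrite -mulr_natr mulf_eq0 subr_eq0 -(dvdn_pcharf (pchar_Fp p_pr)).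
case/orP => [/eqP ab | p_dvd_m].
  by left => x; move: (fab x); rewrite -ab !inE orbb => /eqP.
have [m0 | m_gt0] := posnP m.
  right=> x; have /negbT := card0_eq m0 x.
  by move: (fab x); rewrite !inE => /orP[->|/eqP].
left=> x; apply/eqP/negbFE.
have m'0 : #|[pred x | f x != a]| = 0%N.
  by move: card_split (dvdn_leq m_gt0 p_dvd_m); lia.
exact: card0_eq m'0 x.
Qed.

Lemma Fp_card_imset_gt2 (f : 'F_p -> 'F_p) (c : 'F_p) : (2 < p)%N ->
  injective (fun x => f x + x) -> (forall x, f x + x *+ 2 != c) ->
  (2 < #|[set f x | x : 'F_p]|)%N.
Proof.
move=> p_gt2 inj_shift miss_c; rewrite ltnNge; apply/negP => card_le2.
have [b fab] : exists b, forall x, f x \in [set f 0; b].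
  have [/forallP f_const | /forallPn [y fy]] := boolP [forall x, f x == f 0].
    by exists (f 0) => x; rewrite (eqP (f_const x)) !inE eqxx.
  exists (f y); suff <- : [set f x | x : 'F_p] = [set f 0; f y].
    by move=> x; apply: imset_f.
  apply/esym/eqP; rewrite eqEcard cards2 eq_sym fy (leq_trans card_le2) //.
  rewrite andbT.
  by apply/subsetP => z; rewrite !inE => /orP[] /eqP ->; apply: imset_f.
have [k f_const] : exists k, forall x, f x = k.
  have := Fp_two_valued_sum0_const fab (sumr_inj_addid_eq0 inj_shift).
  by case=> f_const; eexists; apply: f_const.
have two_neq0 : (2%:R : 'F_p) != 0.
  by rewrite -(dvdn_pcharf (pchar_Fp p_pr)) gtnNdvd.
have := miss_c ((c - k) / 2%:R).
by rewrite f_const -[X in k + X]mulr_natr divfK // addrC subrK eqxx.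
Qed.

End PrimeField.

Lemma fam12_of_neq0 l : fam l != 0%N -> fam l = 1%N \/ fam l = 2%N.
Proof. by move: (ltn_ord l.1); rewrite /fam; lia. Qed.

(* ['F_5] is convertible to ['I_5], so the indices of a label live in F_5. *)
Lemma label_Fp_comb (l : label) n :
  (l.2.1 : 'F_5) + (l.2.2 : 'F_5) *+ n = (kidx l + n * iidx l)%:R.
Proof. by rewrite natrD natrM mulr_natl !natr_Zp. Qed.

Section Lines.
Variables (F : numClosedFieldType) (eta : F).
Hypothesis eta_prim : 5.-primitive_root eta.

Lemma onLine_fam1 l x y z w : fam l = 1%N ->
  onLine eta l x y z w =
    (x == eta ^+ (kidx l + iidx l) * z) && (y == eta ^+ iidx l * w).
Proof. by rewrite /onLine => ->. Qed.

Lemma onLine_fam2 l x y z w : fam l = 2%N ->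
  onLine eta l x y z w =
    (x == - eta ^+ iidx l * w) && (y == - eta ^+ (kidx l + iidx l) * z).
Proof. by rewrite /onLine => ->; rewrite !mulN1r. Qed.

Lemma meet_sym l l' : meet eta l l' -> meet eta l' l.
Proof. by case=> x [y [z [w [nz [on_l on_l']]]]]; exists x, y, z, w. Qed.

Lemma meetI l l' (x y z w : F) : (z != 0) || (w != 0) ->
  onLine eta l x y z w -> onLine eta l' x y z w -> meet eta l l'.
Proof.
move=> zw_neq0 on_l on_l'; exists x, y, z, w; split=> //.
by apply: contraL zw_neq0 => /and4P[_ _ /eqP-> /eqP->]; rewrite eqxx.
Qed.

Lemma expr_eta_mod m n : m = n %[mod 5] -> eta ^+ m = eta ^+ n.
Proof. by move=> /eqP mn; apply/eqP; rewrite (eq_prim_root_expr eta_prim). Qed.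

Lemma meet_same_iidx l l' : fam l = fam l' -> fam l != 0%N ->
  iidx l = iidx l' -> meet eta l l'.
Proof.
move=> fam_eq l_neq0 i_eq.
have [fam1 | fam2] := fam12_of_neq0 l_neq0.
- apply: (@meetI _ _ 0 (eta ^+ iidx l) 0 1); rewrite ?oner_eq0 ?orbT //.
  + by rewrite onLine_fam1 // !mulr0 !mulr1 !eqxx.
  + by rewrite onLine_fam1 -?fam_eq // -i_eq !mulr0 !mulr1 !eqxx.
- apply: (@meetI _ _ (- eta ^+ iidx l) 0 0 1); rewrite ?oner_eq0 ?orbT //.
  + by rewrite onLine_fam2 // !mulr0 !mulr1 !eqxx.
  + by rewrite onLine_fam2 -?fam_eq // -i_eq !mulr0 !mulr1 !eqxx.
Qed.

Lemma meet_same_diag l l' : fam l = fam l' -> fam l != 0%N ->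
  kidx l + iidx l = kidx l' + iidx l' %[mod 5] -> meet eta l l'.
Proof.
move=> fam_eq l_neq0 /expr_eta_mod diag_eq.
have [fam1 | fam2] := fam12_of_neq0 l_neq0.
- apply: (@meetI _ _ (eta ^+ (kidx l + iidx l)) 0 1 0); rewrite ?oner_eq0 //.
  + by rewrite onLine_fam1 // !mulr0 !mulr1 !eqxx.
  + by rewrite onLine_fam1 -?fam_eq // diag_eq !mulr0 !mulr1 !eqxx.
- apply: (@meetI _ _ 0 (- eta ^+ (kidx l + iidx l)) 1 0); rewrite ?oner_eq0 //.
  + by rewrite onLine_fam2 // !mulr0 !mulr1 !eqxx.
  + by rewrite onLine_fam2 -?fam_eq // diag_eq !mulr0 !mulr1 !eqxx.
Qed.

Lemma meet_fam12 l l' : fam l = 1%N -> fam l' = 2%N ->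
  kidx l + 2 * iidx l = kidx l' + 2 * iidx l' %[mod 5] -> meet eta l l'.
Proof.
move=> fam1 fam2 cross_eq.
(* [4 * iidx l'] stands for [- iidx l'] in the exponents. *)
apply: (@meetI _ _ (eta ^+ (kidx l + iidx l)) (- eta ^+ (kidx l' + iidx l')) 1
  (- eta ^+ (kidx l + iidx l + 4 * iidx l'))); rewrite ?oner_eq0 //.
- rewrite onLine_fam1 // mulr1 eqxx mulrN -exprD /=; apply/eqP; congr (- _).
  by apply: expr_eta_mod; move: cross_eq; lia.
- rewrite onLine_fam2 // mulr1 eqxx mulNr mulrN opprK -exprD andbT; apply/eqP.
  by apply: expr_eta_mod; lia.
Qed.

End Lines.

Section DisjointLines.
Variables (F : numClosedFieldType) (eta : F).
Hypothesis eta_prim : 5.-primitive_root eta.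
Variable C : {set label}.
Hypothesis C_disjoint :
  forall l l', l \in C -> l' \in C -> l != l' -> ~ meet eta l l'.

Lemma disjoint_meet_eq l l' : l \in C -> l' \in C -> meet eta l l' -> l = l'.
Proof.
move=> lC l'C lml'; case: (eqVneq l l') => // l_neq.
by case: (C_disjoint lC l'C l_neq lml').
Qed.

Lemma famPart_iidx_inj s : s != 0%N ->
  {in famPart C s &, injective (fun l : label => l.2.2)}.
Proof.
move=> s_neq0 l l' /setIdP[lC /eqP fam_l] /setIdP[l'C /eqP fam_l'] i_eq.
apply: disjoint_meet_eq => //; apply: meet_same_iidx; rewrite ?fam_l ?fam_l' //.
by rewrite /iidx i_eq.
Qed.

Lemma famPart_diag_inj s l l' : s != 0%N ->
  l \in famPart C s -> l' \in famPart C s ->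
  kidx l + iidx l = kidx l' + iidx l' %[mod 5] -> l = l'.
Proof.
move=> s_neq0 /setIdP[lC /eqP fam_l] /setIdP[l'C /eqP fam_l'] diag_eq.
by apply: disjoint_meet_eq => //; apply: meet_same_diag; rewrite ?fam_l ?fam_l'.
Qed.

Lemma famPart12_cross s r l l' : (s, r) = (1%N, 2%N) \/ (s, r) = (2%N, 1%N) ->
  l \in famPart C s -> l' \in famPart C r ->
  kidx l + 2 * iidx l != kidx l' + 2 * iidx l' %[mod 5].
Proof.
move=> sr /setIdP[lC /eqP fam_l] /setIdP[l'C /eqP fam_l'].
apply/negP => /eqP cross_eq.
have l_meet_l' : meet eta l l'.
  case: sr fam_l fam_l' => -[-> ->] fam_l fam_l'.
    exact: (meet_fam12 eta_prim fam_l fam_l' cross_eq).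
  exact/meet_sym/(meet_fam12 eta_prim fam_l' fam_l)/esym.
move: sr; rewrite -fam_l -fam_l' (disjoint_meet_eq lC l'C l_meet_l').
by case=> -[->].
Qed.

End DisjointLines.

Theorem lemma3p5 (F : numClosedFieldType) (eta : F)
  (Heta : 5.-primitive_root eta) (C : {set label}) (s r : nat) :
  (forall l l', l \in C -> l' \in C -> l != l' -> ~ meet eta l l') ->
  (4 <= #|famPart C 0|)%N ->
  ((s, r) = (1%N, 2%N) \/ (s, r) = (2%N, 1%N)) ->
  #|famPart C s| = 5%N ->
  #|famPart C r| = 4%N ->
  (3 <= #|[set l.2.1 | l in famPart C s]|)%N.
Proof.
move=> C_disjoint _ sr card_Cs card_Cr.
have s_neq0 : s != 0%N by case: sr => -[-> _].
have [g gP] : exists g : 'I_5 -> label,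
    forall j, g j \in famPart C s /\ (g j).2.2 = j.
  apply: (@in_inj_card_section label 'I_5 (fun l => l.2.2)).
    exact: (famPart_iidx_inj C_disjoint s_neq0).
  by rewrite card_Cs card_ord.
have [l' l'Cr] : exists l', l' \in famPart C r.
  by apply/set0Pn; rewrite -card_gt0 card_Cr.
pose f (j : 'F_5) : 'F_5 := (g j).2.1.
have f_comb j n : f j + j *+ n = (kidx (g j) + n * iidx (g j))%:R.
  by rewrite -label_Fp_comb (gP j).2.
have f_diag j : f j + j = (kidx (g j) + iidx (g j))%:R.
  by rewrite -[j in _ + j]mulr1n f_comb mul1n.
pose c : 'F_5 := l'.2.1 + l'.2.2 *+ 2.
apply: leq_trans (@Fp_card_imset_gt2 5 isT f c isT _ _) _.
- move=> j1 j2 /eqP; rewrite !f_diag Fp_natr_eq // => /eqP.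
  move=> /(famPart_diag_inj Heta C_disjoint s_neq0 (gP j1).1 (gP j2).1) g_eq.
  by rewrite -(gP j1).2 g_eq (gP j2).2.
- move=> j; rewrite f_comb /c label_Fp_comb Fp_natr_eq //.
  exact: (famPart12_cross Heta C_disjoint sr (gP j).1 l'Cr).
- apply: subset_leq_card; apply/subsetP => _ /imsetP[j _ ->].
  exact: imset_f (gP j).1.
Qed.
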